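(* If $f:D^n\to\mathbb R$ is $\alpha$-bisubmodular, then its Lovász extension coincides with its convex closure: $f^L(\mathbf x)=f^-(\mathbf x)$ for all $\mathbf x\in[-\alpha,1]^n$, where $f^-(\mathbf x)=\min\{\sum_{\mathbf a\in D^n}\lambda(\mathbf a)f(\mathbf a):\lambda\in\mathcal P(\mathbf x)\}$.
   Context: Fix $\alpha\in(0,1]$ and $D=\{-\alpha,0,1\}\subset\mathbb R$. Define the partial order $\preceq$ on $D$ by $0\preceq 1$, $0\preceq -\alpha$ (plus reflexivity), with $1$ and $-\alpha$ incomparable; extend it componentwise to $D^n$. Define $\wedge_0$ on $D$ by $1\wedge_0(-\alpha)=(-\alpha)\wedge_0 1=0$ and $x\wedge_0 y=\min(x,y)$ w.r.t. $\preceq$ if $\{x,y\}\ne\{-\alpha,1\}$; for $a\in D$ define $\vee_a$ by $1\vee_a(-\alpha)=(-\alpha)\vee_a 1=a$ and $x\vee_a y=\max(x,y)$ w.r.t. $\preceq$ if $\{x,y\}\ne\{-\alpha,1\}$; extend componentwise to $D^n$. $f:D^n\to\mathbb R$ is $\alpha$-bisubmodular if for all $\mathbf a,\mathbf b\in D^n$: $f(\mathbf a\wedge_0\mathbf b)+\alpha f(\mathbf a\vee_0\mathbf b)+(1-\alpha)f(\mathbf a\vee_1\mathbf b)\le f(\mathbf a)+f(\mathbf b)$. For $\mathbf x\in[-\alpha,1]^n$, $\mathcal P(\mathbf x)$ is the set of $\lambda:D^n\to[0,1]$ with $\sum_{\mathbf a}\lambda(\mathbf a)=1$ and $\sum_{\mathbf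 a}\lambda(\mathbf a)\mathbf a=\mathbf x$. For each $\mathbf x$ there is a unique $\lambda_{\mathbf x}\in\mathcal P(\mathbf x)$ whose support is a chain w.r.t. $\preceq$; the Lovász extension is $f^L(\mathbf x)=\sum_{\mathbf a\in D^n}\lambda_{\mathbf x}(\mathbf a)f(\mathbf a)$. *)

From HB Require Import structures.
From mathcomp Require Import all_boot all_order all_algebra.
From Stdlib Require Import ClassicalEpsilon.
Set Implicit Arguments. Unset Strict Implicit. Unset Printing Implicit Defensive.
Import Order.TTheory GRing.Theory Num.Theory.
Local Open Scope ring_scope.

(* The three-element domain D = {-alpha, 0, 1}: Dm ~ -alpha, D0 ~ 0, D1 ~ 1. *)
Inductive D3 := Dm | D0 | D1.

Definition D3_to (d : D3) : 'I_3 :=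
  match d with Dm => @Ordinal 3 0 isT | D0 => @Ordinal 3 1 isT | D1 => @Ordinal 3 2 isT end.
Definition D3_of (i : 'I_3) : D3 :=
  match val i with 0%N => Dm | 1%N => D0 | _ => D1 end.
Lemma D3_toK : cancel D3_to D3_of. Proof. by case. Qed.
HB.instance Definition _ := Finite.copy D3 (can_type D3_toK).

Definition valD (R : realFieldType) (alpha : R) (d : D3) : R :=
  match d with Dm => - alpha | D0 => 0 | D1 => 1 end.

Definition leD (x y : D3) : bool := (x == D0) || (x == y).

Definition meetD (x y : D3) : D3 :=
  if leD x y then x else if leD y x then y else D0.
Definition joinD (a x y : D3) : D3 :=
  if leD x y then y else if leD y x then x else a.

Definition Dn (n : nat) := {ffun 'I_n -> D3}.

Definition leDn n (a b : Dn n) : bool := [forall i, leD (a i) (b i)].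
Definition meetDn n (a b : Dn n) : Dn n := [ffun i => meetD (a i) (b i)].
Definition joinDn n (c : D3) (a b : Dn n) : Dn n := [ffun i => joinD c (a i) (b i)].

Definition bisubmodular (R : realFieldType) (alpha : R) n (f : Dn n -> R) : Prop :=
  forall a b : Dn n,
    f (meetDn a b) + alpha * f (joinDn D0 a b) + (1 - alpha) * f (joinDn D1 a b)
    <= f a + f b.

Definition inP (R : realFieldType) (alpha : R) n (x : 'I_n -> R) (lam : Dn n -> R) : Prop :=
  [/\ forall a, 0 <= lam a <= 1,
      \sum_(a : Dn n) lam a = 1 &
      forall i, \sum_(a : Dn n) lam a * valD alpha (a i) = x i].

Definition chain_support (R : realFieldType) n (lam : Dn n -> R) : Prop :=
  forall a b : Dn n, lam a != 0 -> lam b != 0 -> leDn a b || leDn b a.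

(* lambda_x : the (unique, by the paper) element of P(x) with chain support *)
Definition lambda_x (R : realFieldType) (alpha : R) n (x : 'I_n -> R) : Dn n -> R :=
  epsilon (inhabits (fun _ => 0))
    (fun lam => inP alpha x lam /\ chain_support lam).

Definition lovasz (R : realFieldType) (alpha : R) n (f : Dn n -> R) (x : 'I_n -> R) : R :=
  \sum_(a : Dn n) lambda_x alpha x a * f a.

Definition is_convex_closure_value (R : realFieldType) (alpha : R) n
    (f : Dn n -> R) (x : 'I_n -> R) (v : R) : Prop :=
  (exists lam, inP alpha x lam /\ \sum_(a : Dn n) lam a * f a = v) /\
  (forall lam, inP alpha x lam -> v <= \sum_(a : Dn n) lam a * f a).

(* Fix x in [-alpha,1]^n.  Every coordinate has a sign [sgx j] in {-alpha,1}
   and a magnitude [mag j] in [0,1] with x_j = mag j * sgx j.  Ranking the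
   coordinates by decreasing magnitude gives a maximal chain
   c_0 = 0 <= c_1 <= ... <= c_n in D^n, where c_k carries the sign on the k
   coordinates of largest magnitude.  The proof has four parts:
   1. the valuation D -> R is alpha-bimodular, hence every affine function
      a |-> c + sum_j y_j a_j satisfies the bisubmodular inequality with
      equality, and f minus an affine function stays bisubmodular;
   2. (greedy lemma) a bisubmodular h vanishing on a maximal chain with
      nonzero signs is nonnegative on all of D^n;
   3. the successive magnitude gaps define a distribution on the chain that
      lies in P(x), so lambda_x exists, and every chain-supported element
      of P(x) is carried by {c_0, ..., c_n};
   4. with g the affine function interpolating f on the chain, g <= f by 2,
      and sum_a mu(a) g(a) = g(x) for every mu in P(x); hence
      f^L(x) = sum lambda_x g = sum mu g <= sum mu f. *)
From mathcomp Require Import all_boot all_order all_algebra.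
From mathcomp Require Import ring lra.
From Stdlib Require Import ClassicalEpsilon.
Import Order.TTheory GRing.Theory Num.Theory.
Local Open Scope ring_scope.

Lemma valD_bimodular {R : realFieldType} (alpha : R) x y :
  valD alpha (meetD x y) + alpha * valD alpha (joinD D0 x y)
    + (1 - alpha) * valD alpha (joinD D1 x y)
  = valD alpha x + valD alpha y.
Proof. by case: x; case: y; rewrite /= ?mulr0 ?mulr1 ?addr0 ?add0r; ring. Qed.

Definition affD {R : realFieldType} (alpha : R) {n} (c : R) (y : 'I_n -> R)
    (a : Dn n) : R :=
  c + \sum_j y j * valD alpha (a j).

Lemma affD_bimodular {R : realFieldType} (alpha : R) {n} c (y : 'I_n -> R) a b :
  affD alpha c y (meetDn a b) + alpha * affD alpha c y (joinDn D0 a b)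
    + (1 - alpha) * affD alpha c y (joinDn D1 a b)
  = affD alpha c y a + affD alpha c y b.
Proof.
have coords : \sum_j y j * valD alpha (meetDn a b j)
    + alpha * \sum_j y j * valD alpha (joinDn D0 a b j)
    + (1 - alpha) * \sum_j y j * valD alpha (joinDn D1 a b j)
  = \sum_j y j * valD alpha (a j) + \sum_j y j * valD alpha (b j).
  rewrite !mulr_sumr -!big_split; apply: eq_bigr => j _; rewrite !ffunE.
  by rewrite /= -mulrDr -(valD_bimodular alpha); ring.
by move: coords; rewrite /affD; lra.
Qed.

Lemma bisubmodular_subr_affD {R : realFieldType} (alpha : R) {n}
    (f : Dn n -> R) c y :
  bisubmodular alpha f -> bisubmodular alpha (fun a => f a - affD alpha c y a).
Proof. by move=> fbis a b; have := fbis a b; have := affD_bimodular alpha c y a b; lra. Qed.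

Lemma expect_affD {R : realFieldType} {alpha : R} {n} {x : 'I_n -> R} {mu c y} :
  inP alpha x mu -> \sum_a mu a * affD alpha c y a = c + \sum_j y j * x j.
Proof.
case=> _ mu_sum mu_mean.
under eq_bigr => a _ do rewrite /affD mulrDr mulr_sumr.
rewrite big_split /= -mulr_suml mu_sum mul1r exchange_big /=; congr (_ + _).
apply: eq_bigr => j _; rewrite -mu_mean mulr_sumr.
by apply: eq_bigr => a _; rewrite mulrCA.
Qed.

Lemma meetDx0 x : meetD x D0 = D0. Proof. by case: x. Qed.
Lemma meetD0x x : meetD D0 x = D0. Proof. by case: x. Qed.
Lemma meetDxx x : meetD x x = x. Proof. by case: x. Qed.
Lemma joinDx0 d x : joinD d x D0 = x. Proof. by case: x. Qed.
Lemma joinD0x d x : joinD d D0 x = x. Proof. by case: x. Qed.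
Lemma joinDxx d x : joinD d x x = x. Proof. by case: x. Qed.
Lemma meetD_signed x y : y != D0 -> meetD x y = D0 \/ meetD x y = y.
Proof. by case: x; case: y; auto. Qed.
Lemma joinD0_signed x y : y != D0 -> joinD D0 x y = D0 \/ joinD D0 x y = y.
Proof. by case: x; case: y; auto. Qed.
Lemma joinD1_absorb x y : y != D0 -> joinD D1 (joinD D1 x y) y = joinD D1 x y.
Proof. by case: x; case: y. Qed.

Section Greedy.
Variables (n : nat) (s : 'I_n -> D3) (rank : 'I_n -> nat).

Definition chain_elt (k : nat) : Dn n :=
  [ffun i => if (rank i < k)%N then s i else D0].

Lemma chain_elt_mono k k' : (k <= k')%N -> leDn (chain_elt k) (chain_elt k').
Proof.
move=> le_kk'; apply/forallP => i; rewrite /leD !ffunE.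
by case: ifP => [/leq_trans -> //|_]; rewrite ?eqxx ?orbT.
Qed.

Definition signed (a : Dn n) : Prop := forall i, a i = D0 \/ a i = s i.

Hypotheses (s_nz : forall i, s i != D0) (rank_inj : injective rank)
  (rank_lt : forall i, (rank i < n)%N).

Lemma chain_elt_top : chain_elt n = [ffun i => s i].
Proof. by apply/ffunP => i; rewrite !ffunE rank_lt. Qed.

Lemma meet_chain_elt a k : signed a ->
  signed (meetDn a (chain_elt k)) /\
  (forall i, meetDn a (chain_elt k) i != D0 -> (rank i < k)%N).
Proof.
move=> sa; split=> i; rewrite !ffunE; case: ifP => lt_ik; rewrite ?meetDx0 ?eqxx //.
  by case: (sa i) => ->; rewrite ?meetD0x ?meetDxx; auto.
by left.
Qed.

Lemma join_chain_elt d {a k j} : signed a ->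
  (forall i, a i != D0 -> (rank i <= k)%N) -> a j != D0 -> rank j = k ->
  joinDn d a (chain_elt k) = chain_elt k.+1.
Proof.
move=> sa supp_a aj rank_j; apply/ffunP => i; rewrite !ffunE ltnS.
case: ltngtP => [lt_ik|gt_ik|eq_ik].
- by case: (sa i) => ->; rewrite ?joinD0x ?joinDxx.
- rewrite joinDx0; case: (a i =P D0) => // /eqP /supp_a.
  by rewrite leqNgt gt_ik.
- have -> : i = j by apply: rank_inj; rewrite eq_ik rank_j.
  by rewrite joinDx0; case: (sa j) => // aj0; rewrite aj0 eqxx in aj.
Qed.

Variables (R : realFieldType) (alpha : R) (h : Dn n -> R).
Hypotheses (alpha_gt0 : 0 < alpha) (alpha_le1 : alpha <= 1)
  (h_bis : bisubmodular alpha h)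
  (h_chain : forall k, (k <= n)%N -> h (chain_elt k) = 0).

(* Induction along the chain: a signed point supported on ranks < k is
   bounded below by its meet with c_(k-1), which is supported on ranks < k-1. *)
Lemma signed_ge0_ranked k : (k <= n)%N -> forall a, signed a ->
  (forall i, a i != D0 -> (rank i < k)%N) -> 0 <= h a.
Proof.
elim: k => [|k IH] le_kn a sa supp_a.
  have -> : a = chain_elt 0.
    by apply/ffunP => i; rewrite ffunE; case: (a i =P D0) => // /eqP /supp_a.
  by rewrite h_chain.
have le_k'n : (k <= n)%N by apply: ltnW.
case: (pickP (fun j => (a j != D0) && (rank j == k))) => [j /andP [aj /eqP rj]|none].
- have [s_meet supp_meet] := meet_chain_elt a k sa.
  have := h_bis a (chain_elt k).
  rewrite (join_chain_elt D0 sa supp_a aj rj) (join_chain_elt D1 sa supp_a aj rj).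
  rewrite (h_chain _ le_k'n) (h_chain _ le_kn).
  by have := IH le_k'n _ s_meet supp_meet; lra.
- apply: (IH le_k'n) => // i ai; have := supp_a i ai.
  by rewrite ltnS leq_eqVlt; have := none i; rewrite ai /= => ->.
Qed.

Lemma signed_ge0 a : signed a -> 0 <= h a.
Proof. by move=> sa; apply: (signed_ge0_ranked n (leqnn n) a sa) => i _. Qed.

(* Bisubmodularity against the top c_n: meet and 0-join are signed. *)
Lemma bisub_top a : (1 - alpha) * h (joinDn D1 a (chain_elt n)) <= h a.
Proof.
have := h_bis a (chain_elt n); rewrite (h_chain _ (leqnn n)).
have meet_ge0 : 0 <= h (meetDn a (chain_elt n)).
  by apply: signed_ge0 => i; rewrite chain_elt_top !ffunE; apply: meetD_signed.
have join0_ge0 : 0 <= h (joinDn D0 a (chain_elt n)).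
  by apply: signed_ge0 => i; rewrite chain_elt_top !ffunE; apply: joinD0_signed.
by have := mulr_ge0 (ltW alpha_gt0) join0_ge0; lra.
Qed.

(* Apply bisub_top to b = a \/_1 c_n, which c_n fixes, to get h b >= 0,
   then to a itself. *)
Lemma greedy_ge0 a : 0 <= h a.
Proof.
set b := joinDn D1 a (chain_elt n).
have b_ge0 : 0 <= h b.
  have := bisub_top b.
  have -> : joinDn D1 b (chain_elt n) = b.
    by apply/ffunP => i; rewrite /b chain_elt_top !ffunE joinD1_absorb.
  by move=> le_b; rewrite -(pmulr_rge0 _ alpha_gt0); lra.
have one_sub_alpha_ge0 : 0 <= 1 - alpha by rewrite subr_ge0.
by have := bisub_top a; have := mulr_ge0 one_sub_alpha_ge0 b_ge0; lra.
Qed.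
End Greedy.
Arguments chain_elt {n} s rank k.
Arguments chain_elt_mono {n s rank k k'}.
Arguments greedy_ge0 {n s rank} s_nz rank_inj rank_lt {R alpha h}.

Section Ranking.
Variables (R : realFieldType) (n : nat) (t : 'I_n -> R).

Definition ahead (i j : 'I_n) : bool := (t j < t i) || ((t i == t j) && (i < j)%N).
Definition rank_by (j : 'I_n) : nat := #|[pred i | ahead i j]|.

Lemma ahead_irr i : ~~ ahead i i.
Proof. by rewrite /ahead ltxx ltnn andbF. Qed.

Lemma ahead_trans i j k : ahead i j -> ahead j k -> ahead i k.
Proof.
rewrite /ahead => /orP [t_ij|/andP [/eqP t_ij ij]] /orP [t_jk|/andP [/eqP t_jk jk]].
- by rewrite (lt_trans t_jk t_ij).
- by rewrite -t_jk t_ij.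
- by rewrite t_ij t_jk.
- by rewrite t_ij t_jk eqxx (ltn_trans ij jk) orbT.
Qed.

Lemma ahead_total i j : i != j -> ahead i j || ahead j i.
Proof.
move=> neq_ij; rewrite /ahead; case: (ltgtP (t i) (t j)) => //= _.
by case: (ltngtP i j) => // /val_inj eq_ij; rewrite eq_ij eqxx in neq_ij.
Qed.

Lemma rank_by_ahead i j : ahead i j -> (rank_by i < rank_by j)%N.
Proof.
move=> ij; apply: proper_card; apply/properP; split.
  by apply/subsetP => l; rewrite !inE => li; apply: ahead_trans li ij.
by exists i; rewrite !inE // ahead_irr.
Qed.

Lemma rank_by_lt j : (rank_by j < n)%N.
Proof.
have : (rank_by j <= #|predC1 j|)%N.
  apply: subset_leq_card; apply/subsetP => l; rewrite !inE.
  by apply: contraTneq => ->; rewrite ahead_irr.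
rewrite cardC1 card_ord => le_rk; apply: leq_ltn_trans le_rk _.
by case: n j => [[]|m].
Qed.

Lemma rank_by_inj : injective rank_by.
Proof.
move=> i j eq_rk; apply/eqP; apply/negPn/negP => /ahead_total /orP [] /rank_by_ahead;
  by rewrite eq_rk ltnn.
Qed.

Lemma rank_by_antitone i j : (rank_by i < rank_by j)%N -> t j <= t i.
Proof.
move=> lt_ij; rewrite leNgt; apply/negP => t_ji.
have /rank_by_ahead : ahead j i by rewrite /ahead t_ji.
by rewrite ltnNge (ltnW lt_ij).
Qed.

Lemma rank_by_strict i j : t j < t i -> (rank_by i < rank_by j)%N.
Proof. by move=> t_ji; apply: rank_by_ahead; rewrite /ahead t_ji. Qed.
End Ranking.
Arguments rank_by {R n} t j.
Arguments rank_by_lt {R n} t j.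
Arguments rank_by_inj {R n t} [x1 x2].
Arguments rank_by_antitone {R n t i j}.
Arguments rank_by_strict {R n t i j}.

(* Summing over coordinates in rank order: an injective ranking with values
   in [0, n) is a bijection onto [0, n). *)
Lemma sum_by_rank {V : nmodType} {n} {rank : 'I_n -> nat} (F : nat -> V) {k} :
  injective rank -> (forall j, (rank j < n)%N) -> (k <= n)%N ->
  \sum_(j | (rank j < k)%N) F (rank j) = \sum_(0 <= r < k) F r.
Proof.
move=> rank_inj rank_lt le_kn; pose ord_rank j : 'I_n := Ordinal (rank_lt j).
have ord_rank_inj : injective ord_rank by move=> i j [/rank_inj].
rewrite (big_nat_widen _ _ _ _ _ le_kn) big_mkord [RHS](reindex_inj ord_rank_inj).
exact: eq_bigl.
Qed.

Section ChainOfPoint.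
Variables (R : realFieldType) (alpha : R) (n : nat) (x : 'I_n -> R).
Hypotheses (alpha_gt0 : 0 < alpha) (x_range : forall i, - alpha <= x i <= 1).

Definition sgx (j : 'I_n) : D3 := if 0 <= x j then D1 else Dm.
Definition mag (j : 'I_n) : R := if 0 <= x j then x j else - x j / alpha.

Lemma sgx_nz j : sgx j != D0. Proof. by rewrite /sgx; case: ifP. Qed.

Lemma valD_sgx_nz j : valD alpha (sgx j) != 0.
Proof. by rewrite /sgx; case: ifP => _ /=; rewrite ?oner_neq0 ?oppr_eq0 ?lt0r_neq0. Qed.

Lemma mag_ge0 j : 0 <= mag j.
Proof.
rewrite /mag; case: ifP => // /negbT; rewrite -ltNge => x_lt0.
by rewrite divr_ge0 ?(ltW alpha_gt0) // oppr_ge0 ltW.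
Qed.

Lemma mag_le1 j : mag j <= 1.
Proof.
have /andP [x_ge x_le] := x_range j; rewrite /mag; case: ifP => // _.
by rewrite ler_pdivrMr // mul1r lerNl.
Qed.

Lemma x_mag j : x j = mag j * valD alpha (sgx j).
Proof.
rewrite /mag /sgx; case: ifP => _ /=; first by rewrite mulr1.
by rewrite mulrN divfK ?opprK ?lt0r_neq0.
Qed.

Definition rkx : 'I_n -> nat := rank_by mag.
Definition cx : nat -> Dn n := chain_elt sgx rkx.

(* mag_from r = magnitude of the coordinate of rank r (0 once r >= n) *)
Definition mag_from (r : nat) : R := \big[Order.max/0]_(j | (r <= rkx j)%N) mag j.

Lemma mag_from_ge0 r : 0 <= mag_from r.
Proof.
rewrite /mag_from; elim/big_ind: _ => // [u v u_ge0 v_ge0|j _]; last exact: mag_ge0.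
by rewrite le_max u_ge0.
Qed.

Lemma mag_from_le1 r : mag_from r <= 1.
Proof. by apply/bigmax_leP; split=> // j _; apply: mag_le1. Qed.

Lemma mag_from_rank j : mag_from (rkx j) = mag j.
Proof.
apply/eqP; rewrite eq_le le_bigmax_cond // andbT.
apply/bigmax_leP; split=> [|i]; first exact: mag_ge0.
rewrite leq_eqVlt => /orP [/eqP/rank_by_inj -> //|]; exact: rank_by_antitone.
Qed.

Lemma mag_from_succ r : mag_from r.+1 <= mag_from r.
Proof.
apply/bigmax_leP; split=> [|i le_ri]; first exact: mag_from_ge0.
by apply: le_bigmax_cond; apply: ltnW.
Qed.

Lemma mag_from_n : mag_from n = 0.
Proof. by rewrite /mag_from big_pred0 // => j; rewrite leqNgt rank_by_lt. Qed.

Definition level (k : nat) : R := if k is r.+1 then mag_from r else 1.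
Definition chain_weight (k : nat) : R := level k - level k.+1.

Lemma chain_weight_ge0 k : 0 <= chain_weight k.
Proof.
by rewrite /chain_weight subr_ge0; case: k => [|k]; [apply: mag_from_le1|apply: mag_from_succ].
Qed.

Lemma chain_weight_tail r : (r <= n.+1)%N -> \sum_(r <= k < n.+1) chain_weight k = level r.
Proof.
move=> le_rn; under eq_bigr => k _ do rewrite /chain_weight -opprB.
by rewrite sumrN telescope_sumr //= mag_from_n opprB subr0.
Qed.

Definition chain_dist (a : Dn n) : R := \sum_(k < n.+1 | a == cx k) chain_weight k.

Lemma chain_dist_expect (F : Dn n -> R) :
  \sum_a chain_dist a * F a = \sum_(k < n.+1) chain_weight k * F (cx k).
Proof.
under eq_bigr => a _ do rewrite /chain_dist mulr_suml.
rewrite (exchange_big_dep xpredT) //=; apply: eq_bigr => k _.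
by rewrite (eq_bigl (fun a => a == cx k)) ?big_pred1_eq.
Qed.

Lemma chain_dist_ge0 a : 0 <= chain_dist a.
Proof. by apply: sumr_ge0 => k _; apply: chain_weight_ge0. Qed.

Lemma chain_dist_sum : \sum_a chain_dist a = 1.
Proof.
under eq_bigr => a _ do rewrite -[chain_dist a]mulr1.
rewrite chain_dist_expect; under eq_bigr => k _ do rewrite mulr1.
by rewrite -(big_mkord xpredT) chain_weight_tail.
Qed.

Lemma chain_dist_mean j : \sum_a chain_dist a * valD alpha (a j) = x j.
Proof.
rewrite chain_dist_expect (eq_bigr (fun k : 'I_n.+1 =>
  (if (rkx j < k)%N then chain_weight k else 0) * valD alpha (sgx j))); last first.
  by move=> k _; rewrite /cx /chain_elt ffunE; case: ifP; rewrite ?mulr0 ?mul0r.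
rewrite -mulr_suml -big_mkcond (eq_bigl (fun k : 'I_n.+1 => true && (rkx j < k)%N)) //.
rewrite -(big_geq_mkord (rkx j).+1 n.+1 xpredT chain_weight) chain_weight_tail.
  by rewrite /= mag_from_rank x_mag.
exact: ltnW (rank_by_lt _ _).
Qed.

Lemma chain_dist_supp a : chain_dist a != 0 -> exists k, a = cx k.
Proof.
case: (pickP (fun k : 'I_n.+1 => a == cx k)) => [k /eqP ->|none]; first by exists k.
by rewrite /chain_dist big_pred0 ?eqxx.
Qed.

Lemma chain_dist_spec : inP alpha x chain_dist /\ chain_support chain_dist.
Proof.
split; first split.
- move=> a; rewrite chain_dist_ge0 -chain_dist_sum (bigD1 a) //= lerDl.
  by apply: sumr_ge0 => b _; apply: chain_dist_ge0.
- exact: chain_dist_sum.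
- exact: chain_dist_mean.
move=> a b /chain_dist_supp [k ->] /chain_dist_supp [k' ->].
case: (leqP k k') => [le_kk'|/ltnW le_k'k].
  by rewrite (chain_elt_mono le_kk').
by rewrite (chain_elt_mono le_k'k) orbT.
Qed.

(* Conversely, every chain-supported element of P(x) is carried by the chain
   c_0, ..., c_n: along a chain each coordinate takes a single nonzero value,
   which must be sgx j, and the mass of {a : a_j != 0} is mag j. *)
Section ChainSupported.
Variable lam : Dn n -> R.
Hypotheses (lam_in : inP alpha x lam) (lam_chain : chain_support lam).

Definition mass (j : 'I_n) : R := \sum_b lam b * (b j != D0)%:R.

Lemma lam_ge0 b : 0 <= lam b.
Proof. by case: lam_in => lam_01 _ _; case/andP: (lam_01 b). Qed.

Lemma support_agree {b b' : Dn n} {j} : lam b != 0 -> lam b' != 0 ->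
  b j != D0 -> b' j != D0 -> b j = b' j.
Proof.
move=> lb lb' bj b'j; case/orP: (lam_chain _ _ lb lb') => /forallP /(_ j); rewrite /leD.
  by rewrite (negbTE bj) => /eqP.
by rewrite (negbTE b'j) => /eqP.
Qed.

Lemma mass_ge {b : Dn n} {j} : b j != D0 -> lam b <= mass j.
Proof.
move=> bj; rewrite /mass (bigD1 b) //= bj mulr1 lerDl.
by apply: sumr_ge0 => c _; rewrite mulr_ge0 ?lam_ge0.
Qed.

Lemma mean_support {b : Dn n} {j} : lam b != 0 -> b j != D0 ->
  x j = mass j * valD alpha (b j).
Proof.
move=> lb bj; case: lam_in => _ _ <-; rewrite /mass mulr_suml.
apply: eq_bigr => c _; case: (lam c =P 0) => [->|/eqP lc]; first by rewrite !mul0r.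
case: (c j =P D0) => [->|/eqP cj]; first by rewrite !mulr0 mul0r.
by rewrite (support_agree lc lb cj bj) mulr1.
Qed.

Lemma support_sign {b : Dn n} {j} : lam b != 0 -> b j != D0 -> b j = sgx j.
Proof.
move=> lb bj; have mass_gt0 : 0 < mass j.
  by apply: lt_le_trans (mass_ge bj); rewrite lt0r lb lam_ge0.
rewrite /sgx (mean_support lb bj); move: bj; case: (b j) => //= _.
  by rewrite mulrN oppr_ge0 pmulr_rle0 // leNgt alpha_gt0.
by rewrite mulr1 ltW.
Qed.

Lemma mean_mass j : x j = mass j * valD alpha (sgx j).
Proof.
case: lam_in => _ _ <-; rewrite /mass mulr_suml.
apply: eq_bigr => c _; case: (lam c =P 0) => [->|/eqP lc]; first by rewrite !mul0r.
case: (c j =P D0) => [->|/eqP cj]; first by rewrite !mulr0 mul0r.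
by rewrite (support_sign lc cj) mulr1.
Qed.

Lemma mag_mass j : mag j = mass j.
Proof. by apply: (mulIf (valD_sgx_nz j)); rewrite -x_mag mean_mass. Qed.

Lemma mass_gap {a : Dn n} {i j} : lam a != 0 -> a j != D0 -> a i = D0 -> mass i + lam a <= mass j.
Proof.
move=> la aj ai; rewrite /mass (bigD1 a) //= [X in _ <= X](bigD1 a) //= ai aj eqxx.
rewrite mulr0 mulr1 add0r addrC lerD2r; apply: ler_sum => b _.
case: (lam b =P 0) => [->|/eqP lb]; first by rewrite !mul0r.
case: (b i =P D0) => [_|/eqP bi] /=; first by rewrite mulr0 mulr_ge0 ?lam_ge0.
have bj : b j != D0.
  case/orP: (lam_chain _ _ la lb) => /forallP le_ab.
    by have := le_ab j; rewrite /leD (negbTE aj) /= => /eqP <-.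
  by have := le_ab i; rewrite /leD (negbTE bi) ai (negbTE bi).
by rewrite bj.
Qed.

Lemma support_on_chain a : lam a != 0 -> a = cx (\max_(j | a j != D0) (rkx j).+1).
Proof.
move=> la; apply/ffunP => i; rewrite /cx /chain_elt ffunE.
case: (a i =P D0) => [ai|/eqP ai]; last first.
  rewrite (@leq_bigmax_cond _ (fun j => a j != D0) (fun j => (rkx j).+1) i ai).
  exact: support_sign la ai.
rewrite ai ltnNge; suff -> : (\max_(j | a j != D0) (rkx j).+1 <= rkx i)%N by [].
apply/bigmax_leqP => j aj; apply: rank_by_strict.
rewrite !mag_mass; apply: lt_le_trans (mass_gap la aj ai).
by rewrite ltrDl lt0r la lam_ge0.
Qed.
End ChainSupported.

(* The affine function agreeing with f on the chain: its slope in coordinate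
   j is the increment of f at the step of the chain that switches j on. *)
Section Interpolant.
Variable f : Dn n -> R.

Definition chain_gap (r : nat) : R := f (cx r.+1) - f (cx r).
Definition slope (j : 'I_n) : R := chain_gap (rkx j) / valD alpha (sgx j).
Definition interp : Dn n -> R := affD alpha (f (cx 0)) slope.

Lemma interp_chain k : (k <= n)%N -> interp (cx k) = f (cx k).
Proof.
move=> le_kn; rewrite /interp /affD (eq_bigr (fun j =>
  if (rkx j < k)%N then chain_gap (rkx j) else 0)); last first.
  move=> j _; rewrite /cx /chain_elt ffunE; case: ifP => _ /=; last by rewrite mulr0.
  by rewrite divfK ?valD_sgx_nz.
rewrite -big_mkcond (sum_by_rank _ rank_by_inj (rank_by_lt mag) le_kn).
by rewrite telescope_sumr // addrC subrK.
Qed.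

(* The interpolant is a minorant of f: f - interp is bisubmodular and
   vanishes on the chain, so the greedy lemma applies. *)
Lemma interp_le (f_bis : bisubmodular alpha f) (alpha_le1 : alpha <= 1) a :
  interp a <= f a.
Proof.
have h_bis : bisubmodular alpha (fun b => f b - interp b).
  exact: bisubmodular_subr_affD.
have h_chain k : (k <= n)%N -> f (cx k) - interp (cx k) = 0.
  by move=> le_kn; rewrite interp_chain // subrr.
rewrite -subr_ge0.
exact: (greedy_ge0 sgx_nz rank_by_inj (rank_by_lt mag) alpha_gt0 alpha_le1 h_bis h_chain).
Qed.

Lemma chain_expect_interp lam : inP alpha x lam -> chain_support lam ->
  \sum_a lam a * f a = \sum_a lam a * interp a.
Proof.
move=> lam_in lam_chain; apply: eq_bigr => a _.
have [->|la] := eqVneq (lam a) 0; first by rewrite !mul0r.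
rewrite (@support_on_chain lam lam_in lam_chain a la) interp_chain //.
by apply/bigmax_leqP => j _; apply: rank_by_lt.
Qed.
End Interpolant.
End ChainOfPoint.
Arguments chain_dist {R} alpha {n} x a.
Arguments chain_dist_spec {R alpha n x}.
Arguments interp {R} alpha {n} x f a.
Arguments interp_le {R alpha n x} alpha_gt0 {f} f_bis alpha_le1 a.
Arguments chain_expect_interp {R alpha n x} alpha_gt0 f {lam}.

Lemma lambda_x_spec {R : realFieldType} {alpha : R} {n} {x : 'I_n -> R} :
  0 < alpha -> (forall i, - alpha <= x i <= 1) ->
  inP alpha x (lambda_x alpha x) /\ chain_support (lambda_x alpha x).
Proof.
move=> alpha_gt0 x_range.
exact: (epsilon_spec (inhabits (fun _ : Dn n => 0 : R))
  (fun lam => inP alpha x lam /\ chain_support lam)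
  (ex_intro _ _ (chain_dist_spec alpha_gt0 x_range))).
Qed.

(* f^L(x) = E_{lambda_x}[interp] = interp(x) = E_mu[interp] <= E_mu[f]. *)
Theorem mainTheorem5 (R : realFieldType) (alpha : R) (n : nat) (f : Dn n -> R) :
  0 < alpha -> alpha <= 1 ->
  bisubmodular alpha f ->
  forall x : 'I_n -> R, (forall i, - alpha <= x i <= 1) ->
  is_convex_closure_value alpha f x (lovasz alpha f x).
Proof.
move=> alpha_gt0 alpha_le1 f_bis x x_range.
have [lamx_in lamx_chain] := lambda_x_spec alpha_gt0 x_range.
split; first by exists (lambda_x alpha x).
move=> mu mu_in; rewrite /lovasz (chain_expect_interp alpha_gt0 f lamx_in lamx_chain).
rewrite /interp (expect_affD lamx_in) -(expect_affD mu_in).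
apply: ler_sum => a _; apply: ler_wpM2l.
  by case: mu_in => mu_01 _ _; case/andP: (mu_01 a).
exact: interp_le.
Qed.
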